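(* Let $u\in W^{k+3,\infty}(\Omega)$ and let $b^{K}_{s,t}$ denote its M-coefficients on $K\in\mathcal T_h$. Then there is a constant $C$ depending only on $k$ and the quasi-uniformity constant $c_1$ such that $$\Big|\frac{b^{K_{i,j}}_{1,k+1}}{h_i^x}-\frac{b^{K_{i+1,j}}_{1,k+1}}{h_{i+1}^x}\Big|\le C h^{k+2}\|u\|_{W^{k+3,\infty}(\Omega)}\quad\forall i\in\{1,\dots,N_x-1\},\ j\in\{1,\dots,N_y\},$$ $$\Big|\frac{b^{K_{i,j}}_{k+1,1}}{h_j^y}-\frac{b^{K_{i,j+1}}_{k+1,1}}{h_{j+1}^y}\Big|\le C h^{k+2}\|u\|_{W^{k+3,\infty}(\Omega)}\quad\forall i\in\{1,\dots,N_x\},\ j\in\{1,\dots,N_y-1\}.$$ (Adjacent elements need not have equal sizes.)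
   Context: $\Omega=(0,1)^2$, $k\ge1$. Mesh: $0=x_0<\dots<x_{N_x}=1$, $0=y_0<\dots<y_{N_y}=1$, $h_i^x=x_i-x_{i-1}$, $h_j^y=y_j-y_{j-1}$, $h=\max_{i,j}\{h_i^x,h_j^y\}$, quasi-uniform: $h/h_i^x\le c_1$, $h/h_j^y\le c_1$. $K_{i,j}=[x_{i-1},x_i]\times[y_{j-1},y_j]$, $F_K:[-1,1]^2\to K$, $x=\frac{h_i^x}{2}\hat x+\frac{x_{i-1}+x_i}{2}$, $y=\frac{h_j^y}{2}\hat y+\frac{y_{j-1}+y_j}{2}$. M-functions and M-decomposition. $L_n$ is the Legendre polynomial of degree $n$ on $[-1,1]$. $\hat M_0=1$, $\hat M_1(\hat x)=\hat x$, $\hat M_n(\hat x)=\int_{-1}^{\hat x}L_{n-1}(t)dt=\frac{1}{2^{n-1}(n-1)!}\frac{d^{n-2}}{d\hat x^{n-2}}(\hat x^2-1)^{n-1}$ for $n\ge2$. On $K$, $M^x_s(x)=\hat M_s(\hat x)$, $M^y_t(y)=\hat M_t(\hat y)$ via $F_K$. For $g$ on $[-1,1]$: $\lambda_0(g)=\frac{g(1)+g(-1)}2$, $\lambda_1(g)=\frac{g(1)-g(-1)}2$, $\lambda_n(g)=\frac{2n-1}{2}\int_{-1}^1 g'(t)L_{n-1}(t)dt$ for $n\ge2$. With $\hat u=u\circ F_K$, the M-coefficients of $u$ on $K$ are $b^K_{s,t}=\lambda_s^{(\hat x)}\lambda_t^{(\hat y)}\hat u$ ($\lambda_s$ acting in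 $\hat x$, $\lambda_t$ in $\hat y$), so that $u|_K=\sum_{s,t\ge0}b^K_{s,t}M^x_sM^y_t$ formally. *)

From Stdlib Require Import Reals Lra List.
From Coquelicot Require Import Coquelicot.
Open Scope R_scope.

(* Leg_pair n x = (L_n x, L_{n+1} x) *)
Fixpoint Leg_pair (n : nat) (x : R) : R * R :=
  match n with
  | O => (1, x)
  | S m => let p := Leg_pair m x in
           (snd p, ((2 * INR m + 3) * x * snd p - (INR m + 1) * fst p) / (INR m + 2))
  end.
Definition Legendre (n : nat) (x : R) : R := fst (Leg_pair n x).

Definition lam (n : nat) (g : R -> R) : R :=
  match n with
  | O => (g 1 + g (-1)) / 2
  | S O => (g 1 - g (-1)) / 2
  | _ => (2 * INR n - 1) / 2 *
         RInt (fun t => Derive g t * Legendre (n - 1) t) (-1) 1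
  end.

Definition Mcoef (u : R -> R -> R) (xl xr yl yr : R) (s t : nat) : R :=
  lam s (fun xh => lam t (fun yh =>
    u ((xr - xl) / 2 * xh + (xl + xr) / 2) ((yr - yl) / 2 * yh + (yl + yr) / 2))).

Definition is_mesh (N : nat) (xs : nat -> R) : Prop :=
  (1 <= N)%nat /\ xs O = 0 /\ xs N = 1 /\
  (forall i, (1 <= i <= N)%nat -> xs (i - 1)%nat < xs i).

Definition step (xs : nat -> R) (i : nat) : R := xs i - xs (i - 1)%nat.

Fixpoint maxstep (xs : nat -> R) (n : nat) : R :=
  match n with
  | O => 0
  | S m => Rmax (maxstep xs m) (xs (S m) - xs m)
  end.

Definition meshsize (Nx : nat) (xs : nat -> R) (Ny : nat) (ys : nat -> R) : R :=
  Rmax (maxstep xs Nx) (maxstep ys Ny).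

Definition quasi_uniform (c1 : R) (Nx : nat) (xs : nat -> R) (Ny : nat) (ys : nat -> R)
  : Prop :=
  (forall i, (1 <= i <= Nx)%nat -> meshsize Nx xs Ny ys / step xs i <= c1) /\
  (forall j, (1 <= j <= Ny)%nat -> meshsize Nx xs Ny ys / step ys j <= c1).

Definition coefK (u : R -> R -> R) (xs ys : nat -> R) (i j s t : nat) : R :=
  Mcoef u (xs (i - 1)%nat) (xs i) (ys (j - 1)%nat) (ys j) s t.

(* iterated partial derivative along a word: true = d/dx, false = d/dy *)
Fixpoint Dw (w : list bool) (u : R -> R -> R) : R -> R -> R :=
  match w with
  | nil => u
  | b :: w' =>
      let f := Dw w' u in
      if b then (fun x y => Derive (fun t => f t y) x)
      else (fun x y => Derive (fun t => f x t) y)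
  end.

Definition C_m_R2 (m : nat) (u : R -> R -> R) : Prop :=
  (forall w, (length w < m)%nat -> forall x y,
      ex_derive (fun t => Dw w u t y) x /\ ex_derive (fun t => Dw w u x t) y) /\
  (forall w, (length w <= m)%nat -> forall x y,
      continuous (fun p : R * R => Dw w u (fst p) (snd p)) (x, y)).

Definition in_sq (x y : R) : Prop := 0 <= x <= 1 /\ 0 <= y <= 1.

(* M bounds the W^{m+1,infinity}(Omega) norm of u: all derivatives of order <= m
   are bounded by M on the closed square and those of order m are M-Lipschitz
   there (w.r.t. the max-distance). *)
Definition W_bound (m : nat) (u : R -> R -> R) (M : R) : Prop :=
  (forall w, (length w <= m)%nat -> forall x y, in_sq x y -> Rabs (Dw w u x y) <= M) /\
  (forall w, length w = m -> forall x y x' y', in_sq x y -> in_sq x' y' ->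
      Rabs (Dw w u x y - Dw w u x' y') <= M * Rmax (Rabs (x - x')) (Rabs (y - y'))).

(* Let [F x = lam (k+1) (fun t => u x (be * t + ga))], where [be] and [ga] are the half-width
   and the midpoint of [[y_(j-1), y_j]].  Since [lam 1] halves the difference of the end values,
   [b_(1,k+1) / h] is half a difference quotient of [F], and the estimate is a bound on the jump
   [(F b - F a)/(b - a) - (F c - F b)/(c - b)] of difference quotients at the common node [b].
   By the definition of [lam (k+1)] this jump is [(2k+1)/2] times the integral of [q L_k], where
   [q t] is [be] times the same jump for [x |-> d_y u (x, be * t + ga)].  As [L_k] is orthogonal
   to the polynomials of degree [< k], that integral is controlled by the [k]-th derivative of
   [q], i.e. [be^(k+1)] times the jump for [d_y^(k+1) u], and by the mean value theorem this jump
   is at most [2 h] times the Lipschitz constant [M] of [d_x d_y^(k+1) u].  The second estimate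
   is the first one for [(x, y) |-> u (y, x)], as [lam 1] commutes with the linear [lam (k+1)]. *)

From Stdlib Require Import Reals Lra Lia List Wf_nat.
From Coquelicot Require Import Coquelicot.
Open Scope R_scope.

(* Coquelicot's generic lemmas leave equalities at type [NormedModule.sort _], which [ring]
   and [field] do not recognise as equalities of reals. *)
Ltac as_R_eq := match goal with |- ?x = ?y => change (@eq R x y) end.

Lemma ex_RInt_continuous_R (f : R -> R) (a b : R) :
  (forall t, continuous f t) -> ex_RInt f a b.
Proof. intros H; apply (ex_RInt_continuous (V := R_CompleteNormedModule)); auto. Qed.

Lemma RInt_scal_R (f : R -> R) (a b al : R) :
  ex_RInt f a b -> RInt (fun t => al * f t) a b = al * RInt f a b.
Proof. exact (RInt_scal (V := R_CompleteNormedModule) f a b al). Qed.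

Lemma RInt_lin (f g : R -> R) (a b al be : R) :
  ex_RInt f a b -> ex_RInt g a b ->
  RInt (fun t => al * f t + be * g t) a b = al * RInt f a b + be * RInt g a b.
Proof.
  intros Hf Hg.
  rewrite <- (RInt_scal_R f a b al Hf), <- (RInt_scal_R g a b be Hg).
  exact (RInt_plus (V := R_CompleteNormedModule) _ _ a b
           (ex_RInt_scal (V := R_NormedModule) f a b al Hf)
           (ex_RInt_scal (V := R_NormedModule) g a b be Hg)).
Qed.

Lemma ex_RInt_lin (f g : R -> R) (a b al be : R) :
  ex_RInt f a b -> ex_RInt g a b -> ex_RInt (fun t => al * f t + be * g t) a b.
Proof.
  intros Hf Hg.
  exact (ex_RInt_plus (V := R_NormedModule) _ _ a b
           (ex_RInt_scal (V := R_NormedModule) f a b al Hf)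
           (ex_RInt_scal (V := R_NormedModule) g a b be Hg)).
Qed.

Lemma RInt_lin3 (f g h : R -> R) (a b al be ga : R) :
  ex_RInt f a b -> ex_RInt g a b -> ex_RInt h a b ->
  RInt (fun t => al * f t + be * g t + ga * h t) a b
  = al * RInt f a b + be * RInt g a b + ga * RInt h a b.
Proof.
  intros Hf Hg Hh.
  rewrite (RInt_ext (V := R_CompleteNormedModule) _
             (fun t => 1 * (al * f t + be * g t) + ga * h t))
    by (intros; simpl; as_R_eq; ring).
  rewrite RInt_lin; [| apply ex_RInt_lin; assumption | assumption].
  rewrite (RInt_lin f g) by assumption.
  as_R_eq; ring.
Qed.

Lemma is_derive_continuous_R (f : R -> R) (x l : R) : is_derive f x l -> continuous f x.
Proof. intros H; apply (ex_derive_continuous (V := R_NormedModule)); exists l; exact H. Qed.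

Lemma is_derive_continuity_pt (f : R -> R) (x l : R) : is_derive f x l -> continuity_pt f x.
Proof. intros H; apply continuity_pt_filterlim, (is_derive_continuous_R f x l H). Qed.

Lemma continuous_mult_R (f g : R -> R) (x : R) :
  continuous f x -> continuous g x -> continuous (fun t => f t * g t) x.
Proof. apply (continuous_mult (K := R_AbsRing)). Qed.

Lemma continuous_lin (f g : R -> R) (al be x : R) :
  continuous f x -> continuous g x -> continuous (fun t => al * f t + be * g t) x.
Proof.
  intros Hf Hg.
  apply (continuous_plus (V := R_NormedModule) (fun t => scal al (f t)) (fun t => scal be (g t)));
    apply (continuous_scal_r (V := R_NormedModule)); assumption.
Qed.

Lemma is_derive_affine_comp (f : R -> R) (al ga t l : R) :
  is_derive f (al * t + ga) l -> is_derive (fun s => f (al * s + ga)) t (al * l).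
Proof.
  intros H.
  apply (is_derive_comp (V := R_NormedModule) f (fun s => al * s + ga)); [exact H|].
  auto_derive; auto; ring.
Qed.

Lemma continuous_pow_R (p : nat) (t : R) : continuous (fun s => s ^ p) t.
Proof.
  apply (is_derive_continuous_R _ _ (INR p * 1 * t ^ pred p)).
  apply (is_derive_pow (fun s => s) p t 1), (is_derive_id (K := R_AbsRing)).
Qed.

(** * Legendre polynomials *)

Fixpoint Legendre_der_pair (n : nat) (x : R) : R * R :=
  match n with
  | O => (0, 1)
  | S m => let p := Legendre_der_pair m x in
           (snd p, ((2 * INR m + 3) * (snd (Leg_pair m x) + x * snd p) - (INR m + 1) * fst p)
                   / (INR m + 2))
  end.
Definition Legendre_der (n : nat) (x : R) : R := fst (Legendre_der_pair n x).

Lemma Legendre_SS n x : Legendre (S (S n)) x =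
  ((2 * INR n + 3) * x * Legendre (S n) x - (INR n + 1) * Legendre n x) / (INR n + 2).
Proof. reflexivity. Qed.

Lemma Legendre_der_SS n x : Legendre_der (S (S n)) x =
  ((2 * INR n + 3) * (Legendre (S n) x + x * Legendre_der (S n) x)
   - (INR n + 1) * Legendre_der n x) / (INR n + 2).
Proof. reflexivity. Qed.

Lemma INR_plus2_pos n : 0 < INR n + 2.
Proof. pose proof (pos_INR n); lra. Qed.

Lemma is_derive_Legendre n x : is_derive (Legendre n) x (Legendre_der n x).
Proof.
  revert x.
  enough (H : forall x, is_derive (Legendre n) x (Legendre_der n x) /\
                        is_derive (Legendre (S n)) x (Legendre_der (S n) x)) by apply H.
  induction n as [|n IH]; intros x.
  - split.
    + apply (is_derive_ext (fun _ => 1)); [reflexivity|].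
      apply (is_derive_const (V := R_NormedModule)).
    + apply (is_derive_ext (fun t => t)); [reflexivity|].
      apply (is_derive_id (K := R_AbsRing)).
  - split; [apply IH|].
    assert (H0 := fun t => proj1 (IH t)). assert (H1 := fun t => proj2 (IH t)).
    apply (is_derive_ext (fun t => ((2 * INR n + 3) * t * Legendre (S n) t
                                    - (INR n + 1) * Legendre n t) / (INR n + 2)));
      [reflexivity|].
    rewrite Legendre_der_SS.
    pose proof (INR_plus2_pos n).
    auto_derive.
    + repeat split; [exists (Legendre_der (S n) x); apply H1 | exists (Legendre_der n x); apply H0].
    + replace (Derive (fun t => Legendre (S n) t) x) with (Legendre_der (S n) x)
        by (symmetry; apply is_derive_unique, H1).
      replace (Derive (fun t => Legendre n t) x) with (Legendre_der n x)
        by (symmetry; apply is_derive_unique, H0).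
      field; lra.
Qed.

Lemma continuous_Legendre n x : continuous (Legendre n) x.
Proof. exact (is_derive_continuous_R _ _ _ (is_derive_Legendre n x)). Qed.

Lemma Legendre_der_identity n x :
  (x ^ 2 - 1) * Legendre_der (S n) x = (INR n + 1) * (x * Legendre (S n) x - Legendre n x).
Proof.
  revert x.
  enough (H : forall x,
    (x ^ 2 - 1) * Legendre_der (S n) x = (INR n + 1) * (x * Legendre (S n) x - Legendre n x) /\
    (x ^ 2 - 1) * Legendre_der (S (S n)) x
    = (INR (S n) + 1) * (x * Legendre (S (S n)) x - Legendre (S n) x)) by apply H.
  induction n as [|n IH]; intros x.
  - split; unfold Legendre_der, Legendre; simpl; field.
  - destruct (IH x) as [T0 T1]. split; [exact T1|].
    rewrite Legendre_der_SS, (Legendre_SS (S n)), Legendre_der_SS, Legendre_SS.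
    rewrite Legendre_der_SS, Legendre_SS in T1.
    set (L0 := Legendre n x) in *. set (L1 := Legendre (S n) x) in *.
    set (D0 := Legendre_der n x) in *. set (D1 := Legendre_der (S n) x) in *.
    rewrite !S_INR in *. set (m := INR n) in *.
    assert (Hm : 0 <= m) by apply pos_INR.
    set (D2 := ((2 * m + 3) * (L1 + x * D1) - (m + 1) * D0) / (m + 2)) in *.
    set (L2 := ((2 * m + 3) * x * L1 - (m + 1) * L0) / (m + 2)) in *.
    transitivity (((2 * (m + 1) + 3) * ((x ^ 2 - 1) * L2)
                   + (2 * (m + 1) + 3) * x * ((x ^ 2 - 1) * D2)
                   - (m + 1 + 1) * ((x ^ 2 - 1) * D1)) / (m + 1 + 2)); [field; lra|].
    rewrite T1, T0. unfold L2. field. lra.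
Qed.

(* Far from sharp ([|L_n| <= 1]), but any bound depending only on [n] will do. *)
Lemma Legendre_bound n x : -1 <= x <= 1 -> Rabs (Legendre n x) <= 3 ^ n.
Proof.
  intros Hx. revert n.
  enough (H : forall n, Rabs (Legendre n x) <= 3 ^ n /\ Rabs (Legendre (S n) x) <= 3 ^ S n)
    by apply H.
  assert (Hx1 : Rabs x <= 1) by (apply Rabs_le; lra).
  induction n as [|n [B0 B1]].
  - unfold Legendre; simpl. rewrite Rabs_R1. lra.
  - split; [exact B1|].
    rewrite Legendre_SS.
    assert (Hm : 0 <= INR n) by apply pos_INR.
    assert (Hp : 0 < 3 ^ n) by (apply pow_lt; lra).
    assert (Hxl : Rabs x * Rabs (Legendre (S n) x) <= 3 ^ S n).
    { rewrite <- (Rmult_1_l (3 ^ S n)). apply Rmult_le_compat; auto using Rabs_pos. }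
    unfold Rdiv. rewrite Rabs_mult, (Rabs_right (/ (INR n + 2)))
      by (apply Rle_ge, Rlt_le, Rinv_0_lt_compat; lra).
    apply (Rmult_le_reg_r (INR n + 2)); [lra|].
    rewrite Rmult_assoc, Rinv_l, Rmult_1_r by lra.
    eapply Rle_trans; [apply Rabs_triang|].
    rewrite Rabs_Ropp, !Rabs_mult, (Rabs_right (2 * INR n + 3)), (Rabs_right (INR n + 1)) by lra.
    simpl in *. nra.
Qed.

(** * Orthogonality of [L_n] to polynomials of lower degree *)

Definition Legendre_moment (n p : nat) : R := RInt (fun t => t ^ p * Legendre n t) (-1) 1.

Lemma continuous_monomial_Legendre p n t : continuous (fun s => s ^ p * Legendre n s) t.
Proof. apply continuous_mult_R; [apply continuous_pow_R | apply continuous_Legendre]. Qed.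

Lemma ex_RInt_monomial_Legendre p n : ex_RInt (fun s => s ^ p * Legendre n s) (-1) 1.
Proof. apply ex_RInt_continuous_R, continuous_monomial_Legendre. Qed.

Lemma Legendre_moment_SS n p : Legendre_moment (S (S n)) p =
  ((2 * INR n + 3) * Legendre_moment (S n) (S p) - (INR n + 1) * Legendre_moment n p)
  / (INR n + 2).
Proof.
  pose proof (INR_plus2_pos n).
  unfold Legendre_moment.
  rewrite (RInt_ext (V := R_CompleteNormedModule) _
     (fun t => (2 * INR n + 3) / (INR n + 2) * (t ^ S p * Legendre (S n) t)
             + (- (INR n + 1) / (INR n + 2)) * (t ^ p * Legendre n t)))
    by (intros; rewrite Legendre_SS; simpl; field; lra).
  rewrite RInt_lin by apply ex_RInt_monomial_Legendre. field. lra.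
Qed.

(* Integration by parts against [(t^2 - 1) t^p], which vanishes at [t = -1] and [t = 1];
   [Legendre_der_identity] turns its derivative term into Legendre polynomials. *)
Lemma Legendre_moment_by_parts n p :
  (INR p + 2 + INR (S n)) * Legendre_moment (S n) (S p)
  - INR p * Legendre_moment (S n) (pred p) - INR (S n) * Legendre_moment n p = 0.
Proof.
  set (df := fun t => (INR p + 2 + INR (S n)) * (t ^ S p * Legendre (S n) t)
     + (- INR p) * (t ^ pred p * Legendre (S n) t) + (- INR (S n)) * (t ^ p * Legendre n t)).
  assert (HD : forall t, is_derive (fun s => s ^ p * ((s ^ 2 - 1) * Legendre (S n) s)) t (df t)).
  { intros t.
    assert (H1 := is_derive_Legendre (S n) t).
    auto_derive; [repeat split; eexists; exact H1|].
    replace (Derive (fun s => Legendre (S n) s) t) with (Legendre_der (S n) t)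
      by (symmetry; apply is_derive_unique, H1).
    pose proof (Legendre_der_identity n t) as E.
    unfold df. rewrite S_INR.
    destruct p as [|p]; simpl pred; rewrite ?S_INR; simpl; as_R_eq;
      replace ((t * (t * 1) + - (1)) * (1 * Legendre_der (S n) t))
        with ((INR n + 1) * (t * Legendre (S n) t - Legendre n t)) by (rewrite <- E; ring);
      ring. }
  assert (HC : forall t, continuous df t).
  { intros t; unfold df.
    apply (continuous_ext (fun t => 1 * ((INR p + 2 + INR (S n)) * (t ^ S p * Legendre (S n) t)
                                         + (- INR p) * (t ^ pred p * Legendre (S n) t))
                                    + (- INR (S n)) * (t ^ p * Legendre n t)));
      [intros; as_R_eq; ring|].
    apply continuous_lin; [apply continuous_lin|]; apply continuous_monomial_Legendre. }
  pose proof (is_RInt_derive (V := R_CompleteNormedModule) _ df (-1) 1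
                (fun t _ => HD t) (fun t _ => HC t)) as HI.
  apply is_RInt_unique in HI.
  unfold df in HI. rewrite RInt_lin3 in HI by apply ex_RInt_monomial_Legendre.
  unfold Legendre_moment.
  match type of HI with ?z = _ => transitivity z; [ring | rewrite HI] end.
  unfold minus, plus, opp; simpl. ring.
Qed.

Lemma Legendre_moment_0 n : (1 <= n <= 2)%nat -> Legendre_moment n 0 = 0.
Proof.
  intros Hn. unfold Legendre_moment.
  set (F := fun t => if Nat.eqb n 1 then t ^ 2 / 2 else (t ^ 3 - t) / 2).
  assert (H : is_RInt (fun t => t ^ 0 * Legendre n t) (-1) 1 (minus (F 1) (F (-1)))).
  { apply (is_RInt_derive (V := R_CompleteNormedModule) F).
    - intros x _. unfold F, Legendre.
      destruct n as [|[|[|n]]]; try lia; simpl; auto_derive; auto; field.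
    - intros x _. apply continuous_monomial_Legendre. }
  rewrite (is_RInt_unique _ _ _ _ H). unfold F, minus, plus, opp; simpl.
  destruct (Nat.eqb n 1); field.
Qed.

Lemma Legendre_moment_eq0 N p : (p < N)%nat -> Legendre_moment N p = 0.
Proof.
  revert p. induction N as [N IHN] using lt_wf_ind.
  intros p. induction p as [p IHp] using lt_wf_ind. intros Hp.
  destruct p as [|q].
  - destruct N as [|[|[|n]]]; try lia; try (apply Legendre_moment_0; lia).
    rewrite Legendre_moment_SS, (IHN (S (S n))), (IHN (S n)) by lia.
    unfold Rdiv; ring.
  - destruct N as [|n]; [lia|].
    pose proof (Legendre_moment_by_parts n q) as E.
    rewrite (IHN n) in E by lia.
    assert (Hz : INR q * Legendre_moment (S n) (pred q) = 0).
    { destruct q as [|q']; [simpl; ring|]. simpl pred. rewrite (IHp q') by lia. ring. }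
    pose proof (pos_INR q). pose proof (pos_INR (S n)).
    apply (Rmult_eq_reg_l (INR q + 2 + INR (S n))); lra.
Qed.

Fixpoint poly (c : nat -> R) (n : nat) (t : R) : R :=
  match n with
  | O => 0
  | S m => poly c m t + c m * t ^ m
  end.

Lemma poly_ext c c' n t : (forall m, c m = c' m) -> poly c n t = poly c' n t.
Proof. intros H; induction n; simpl; [reflexivity|]. rewrite IHn, H; reflexivity. Qed.

Lemma poly_at_0 c n : poly c (S n) 0 = c 0%nat.
Proof.
  induction n as [|n IH]; [simpl; ring|].
  change (poly c (S n) 0 + c (S n) * 0 ^ S n = c 0%nat). rewrite IH. simpl. ring.
Qed.

Lemma is_derive_poly c n t :
  is_derive (poly c n) t (poly (fun m => INR (S m) * c (S m)) (pred n) t).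
Proof.
  induction n as [|n IH].
  - apply (is_derive_const (V := R_NormedModule)).
  - apply (is_derive_ext (fun s => poly c n s + c n * s ^ n)); [reflexivity|].
    auto_derive; [eexists; exact IH|].
    replace (Derive (fun s => poly c n s) t)
      with (poly (fun m => INR (S m) * c (S m)) (pred n) t)
      by (symmetry; apply is_derive_unique, IH).
    destruct n as [|n]; cbn [pred poly INR]; as_R_eq; ring.
Qed.

Lemma continuous_poly c n t : continuous (poly c n) t.
Proof. exact (is_derive_continuous_R _ _ _ (is_derive_poly c n t)). Qed.

(* Each of the [n] antiderivatives is taken from [0] within [[-1, 1]], an interval of
   length at most [1] on either side, so the error never exceeds [K]. *)
Lemma poly_approx n (q : nat -> R -> R) (K : R) :
  (forall m t, (m < n)%nat -> is_derive (q m) t (q (S m) t)) ->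
  (forall t, -1 <= t <= 1 -> Rabs (q n t) <= K) ->
  exists c, forall t, -1 <= t <= 1 -> Rabs (q 0%nat t - poly c n t) <= K.
Proof.
  revert q. induction n as [|n IH]; intros q Hd Hb.
  - exists (fun _ => 0). intros t Ht. simpl. rewrite Rminus_0_r. auto.
  - destruct (IH (fun m => q (S m))) as [c' Hc']; [intros; apply Hd; lia | exact Hb |].
    set (c := fun m => match m with O => q 0%nat 0 | S m' => c' m' / INR (S m') end).
    exists c. intros t Ht.
    set (Rf := fun s => q 0%nat s - poly c (S n) s).
    assert (HR : forall s, is_derive Rf s (q 1%nat s - poly c' n s)).
    { intros s. apply (is_derive_minus (V := R_NormedModule)); [apply Hd; lia|].
      rewrite (poly_ext c' (fun m => INR (S m) * c (S m))); [apply is_derive_poly|].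
      intros m. unfold c. field. apply not_0_INR. lia. }
    destruct (MVT_gen Rf 0 t (fun s => q 1%nat s - poly c' n s)) as [xi [Hxi Heq]].
    { intros x _. apply HR. }
    { intros x _. exact (is_derive_continuity_pt _ _ _ (HR x)). }
    assert (R0 : Rf 0 = 0) by (unfold Rf; rewrite poly_at_0; unfold c; ring).
    change (Rabs (Rf t) <= K).
    replace (Rf t) with ((q 1%nat xi - poly c' n xi) * t) by lra.
    assert (Hxi' : -1 <= xi <= 1).
    { revert Hxi. apply Rmin_case; apply Rmax_case; lra. }
    specialize (Hc' xi Hxi').
    rewrite Rabs_mult.
    assert (Ht1 : Rabs t <= 1) by (apply Rabs_le; lra).
    pose proof (Rabs_pos (q 1%nat xi - poly c' n xi)). pose proof (Rabs_pos t). nra.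
Qed.

Lemma RInt_poly_Legendre c n k : (n <= k)%nat ->
  RInt (fun t => poly c n t * Legendre k t) (-1) 1 = 0.
Proof.
  induction n as [|n IH]; intros Hn.
  - simpl.
    rewrite (RInt_ext (V := R_CompleteNormedModule) _ (fun _ => 0)) by (intros; as_R_eq; ring).
    rewrite (RInt_const (V := R_CompleteNormedModule)). apply Rmult_0_r.
  - rewrite (RInt_ext (V := R_CompleteNormedModule) _
       (fun t => 1 * (poly c n t * Legendre k t) + c n * (t ^ n * Legendre k t)))
      by (intros; simpl; ring).
    rewrite RInt_lin.
    + rewrite IH by lia. fold (Legendre_moment k n). rewrite Legendre_moment_eq0 by lia.
      as_R_eq; ring.
    + apply ex_RInt_continuous_R. intros; apply continuous_mult_R;
        [apply continuous_poly | apply continuous_Legendre].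
    + apply ex_RInt_monomial_Legendre.
Qed.

(* [L_k] is orthogonal to the polynomials of degree [< k], so only the Taylor remainder of
   [q 0] counts. *)
Lemma RInt_Legendre_bound k (q : nat -> R -> R) (K : R) : (1 <= k)%nat ->
  (forall m t, (m < k)%nat -> is_derive (q m) t (q (S m) t)) ->
  (forall t, -1 <= t <= 1 -> Rabs (q k t) <= K) ->
  Rabs (RInt (fun t => q 0%nat t * Legendre k t) (-1) 1) <= 2 * K * 3 ^ k.
Proof.
  intros Hk Hd Hb.
  destruct (poly_approx k q K Hd Hb) as [c Hc].
  assert (Hq0 : forall t, continuous (q 0%nat) t)
    by (intros t; exact (is_derive_continuous_R _ _ _ (Hd 0%nat t Hk))).
  assert (I1 : ex_RInt (fun t => (q 0%nat t - poly c k t) * Legendre k t) (-1) 1).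
  { apply ex_RInt_continuous_R. intros t.
    apply continuous_mult_R; [|apply continuous_Legendre].
    apply (continuous_ext (fun s => 1 * q 0%nat s + (-1) * poly c k s));
      [intros; as_R_eq; ring|].
    apply continuous_lin; [apply Hq0 | apply continuous_poly]. }
  assert (I2 : ex_RInt (fun t => poly c k t * Legendre k t) (-1) 1).
  { apply ex_RInt_continuous_R. intros t.
    apply continuous_mult_R; [apply continuous_poly | apply continuous_Legendre]. }
  rewrite (RInt_ext (V := R_CompleteNormedModule) _
     (fun t => 1 * ((q 0%nat t - poly c k t) * Legendre k t) + 1 * (poly c k t * Legendre k t)))
    by (intros; simpl; ring).
  rewrite RInt_lin, RInt_poly_Legendre by (auto; lia).
  rewrite Rmult_0_r, Rplus_0_r, Rmult_1_l.
  replace (2 * K * 3 ^ k) with ((1 - -1) * (K * 3 ^ k)) by ring.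
  apply abs_RInt_le_const; [lra | exact I1|].
  intros t Ht. rewrite Rabs_mult.
  apply Rmult_le_compat; auto using Rabs_pos, Legendre_bound.
Qed.

(** * Jumps of difference quotients *)

Definition slope_jump (a b c : R) (g : R -> R) : R :=
  (g b - g a) / (b - a) - (g c - g b) / (c - b).

Lemma slope_jump_scal a b c al g :
  slope_jump a b c (fun x => al * g x) = al * slope_jump a b c g.
Proof. unfold slope_jump, Rdiv. ring. Qed.

Lemma slope_jump_mult_r a b c g l :
  slope_jump a b c (fun x => g x * l) = slope_jump a b c g * l.
Proof. unfold slope_jump, Rdiv. ring. Qed.

Lemma is_derive_slope_jump (G : R -> R -> R) (G' : R -> R) a b c t :
  (forall x, is_derive (G x) t (G' x)) ->
  is_derive (fun s => slope_jump a b c (fun x => G x s)) t (slope_jump a b c G').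
Proof.
  intros HG. unfold slope_jump.
  apply (is_derive_minus (V := R_NormedModule));
    [apply (is_derive_scal_l (V := R_NormedModule) (fun s => G b s - G a s)) |
     apply (is_derive_scal_l (V := R_NormedModule) (fun s => G c s - G b s))];
    apply (is_derive_minus (V := R_NormedModule)); apply HG.
Qed.

Lemma RInt_slope_jump (G : R -> R -> R) a b c lo hi :
  (forall x, ex_RInt (G x) lo hi) ->
  RInt (fun t => slope_jump a b c (fun x => G x t)) lo hi
  = slope_jump a b c (fun x => RInt (G x) lo hi).
Proof.
  intros HG.
  rewrite (RInt_ext (V := R_CompleteNormedModule) _
    (fun t => (/ (b - a) + / (c - b)) * G b t + (- / (b - a)) * G a t + (- / (c - b)) * G c t))
    by (intros; unfold slope_jump, Rdiv; as_R_eq; ring).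
  rewrite RInt_lin3 by apply HG.
  unfold slope_jump, Rdiv. as_R_eq; ring.
Qed.

Lemma ex_RInt_slope_jump (G : R -> R -> R) a b c lo hi :
  (forall x, ex_RInt (G x) lo hi) ->
  ex_RInt (fun t => slope_jump a b c (fun x => G x t)) lo hi.
Proof.
  intros HG.
  apply (ex_RInt_ext (fun t => 1 * ((/ (b - a) + / (c - b)) * G b t + (- / (b - a)) * G a t)
                              + (- / (c - b)) * G c t));
    [intros; unfold slope_jump, Rdiv; as_R_eq; ring|].
  apply ex_RInt_lin; [apply ex_RInt_lin|]; apply HG.
Qed.

Lemma slope_jump_bound (g g' : R -> R) (a b c L : R) :
  a < b -> b < c ->
  (forall x, a <= x <= c -> is_derive g x (g' x)) ->
  (forall x x', a <= x <= c -> a <= x' <= c -> Rabs (g' x - g' x') <= L * Rabs (x - x')) ->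
  Rabs (slope_jump a b c g) <= L * (c - a).
Proof.
  intros Hab Hbc Hd HL.
  assert (Hmvt : forall p r, a <= p -> p < r -> r <= c ->
            exists xi, p <= xi <= r /\ g r - g p = g' xi * (r - p)).
  { intros p r Hp Hpr Hr.
    destruct (MVT_gen g p r g') as [xi [Hxi E]].
    - rewrite Rmin_left, Rmax_right by lra. intros x Hx. apply Hd. lra.
    - rewrite Rmin_left, Rmax_right by lra. intros x Hx.
      apply (is_derive_continuity_pt _ _ (g' x)), Hd. lra.
    - rewrite Rmin_left, Rmax_right in Hxi by lra. eauto. }
  destruct (Hmvt a b) as [x1 [Hx1 E1]]; try lra.
  destruct (Hmvt b c) as [x2 [Hx2 E2]]; try lra.
  replace (slope_jump a b c g) with (g' x1 - g' x2)
    by (unfold slope_jump; rewrite E1, E2; field; lra).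
  assert (HL0 : 0 <= L).
  { specialize (HL a c ltac:(lra) ltac:(lra)).
    rewrite (Rabs_left (a - c)) in HL by lra. pose proof (Rabs_pos (g' a - g' c)). nra. }
  eapply Rle_trans; [apply HL; lra|].
  apply Rmult_le_compat_l; [exact HL0|]. apply Rabs_le. lra.
Qed.

(** * The functionals [lam] and the M-coefficients *)

Lemma lam_ext n f g : (forall x, f x = g x) -> lam n f = lam n g.
Proof.
  intros H. destruct n as [|[|n]]; simpl; rewrite ?H; try reflexivity.
  f_equal. apply (RInt_ext (V := R_CompleteNormedModule)). intros t _.
  rewrite (Derive_ext f g t H). reflexivity.
Qed.

Lemma lam_affine n (f f' : R -> R) (al ga : R) : (2 <= n)%nat ->
  (forall y, is_derive f y (f' y)) -> (forall y, continuous f' y) ->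
  lam n (fun t => f (al * t + ga))
  = (2 * INR n - 1) / 2 * (al * RInt (fun t => f' (al * t + ga) * Legendre (n - 1) t) (-1) 1).
Proof.
  intros Hn Hf Hc. destruct n as [|[|n]]; try lia. unfold lam. f_equal.
  rewrite <- RInt_scal_R.
  - apply (RInt_ext (V := R_CompleteNormedModule)). intros t _.
    replace (Derive (fun s => f (al * s + ga)) t) with (al * f' (al * t + ga))
      by (symmetry; apply is_derive_unique, is_derive_affine_comp, Hf).
    as_R_eq; ring.
  - apply ex_RInt_continuous_R. intros t.
    apply continuous_mult_R; [|apply continuous_Legendre].
    apply (continuous_comp (fun s => al * s + ga) f'); [|apply Hc].
    apply (is_derive_continuous_R _ _ al). auto_derive; auto; ring.
Qed.

Lemma lam_half_minus n (f g f' g' : R -> R) : (2 <= n)%nat ->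
  (forall t, is_derive f t (f' t)) -> (forall t, is_derive g t (g' t)) ->
  (forall t, continuous f' t) -> (forall t, continuous g' t) ->
  lam n (fun x => (f x - g x) / 2) = (lam n f - lam n g) / 2.
Proof.
  intros Hn Hf Hg Cf Cg. destruct n as [|[|n]]; try lia. unfold lam.
  assert (If : ex_RInt (fun t => f' t * Legendre (S (S n) - 1) t) (-1) 1)
    by (apply ex_RInt_continuous_R; intros;
        apply continuous_mult_R; auto using continuous_Legendre).
  assert (Ig : ex_RInt (fun t => g' t * Legendre (S (S n) - 1) t) (-1) 1)
    by (apply ex_RInt_continuous_R; intros;
        apply continuous_mult_R; auto using continuous_Legendre).
  rewrite (RInt_ext (V := R_CompleteNormedModule)
             (fun t => Derive (fun x => (f x - g x) / 2) t * _)
             (fun t => 1 / 2 * (f' t * Legendre (S (S n) - 1) t)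
                       + (- 1 / 2) * (g' t * Legendre (S (S n) - 1) t))).
  2:{ intros t _.
      replace (Derive (fun x => (f x - g x) / 2) t) with ((f' t - g' t) / 2).
      - as_R_eq; field.
      - symmetry. apply is_derive_unique. unfold Rdiv.
        apply (is_derive_scal_l (V := R_NormedModule) (fun x => f x - g x)).
        apply (is_derive_minus (V := R_NormedModule)); auto. }
  rewrite (RInt_ext (V := R_CompleteNormedModule) (fun t => Derive f t * _)
             (fun t => f' t * Legendre (S (S n) - 1) t))
    by (intros t _; rewrite (is_derive_unique f t (f' t) (Hf t)); reflexivity).
  rewrite (RInt_ext (V := R_CompleteNormedModule) (fun t => Derive g t * _)
             (fun t => g' t * Legendre (S (S n) - 1) t))
    by (intros t _; rewrite (is_derive_unique g t (g' t) (Hg t)); reflexivity).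
  rewrite RInt_lin by assumption. field.
Qed.

Lemma Mcoef_1 u xl xr yl yr t :
  Mcoef u xl xr yl yr 1 t
  = (lam t (fun yh => u xr ((yr - yl) / 2 * yh + (yl + yr) / 2))
     - lam t (fun yh => u xl ((yr - yl) / 2 * yh + (yl + yr) / 2))) / 2.
Proof.
  unfold Mcoef, lam at 1.
  replace ((xr - xl) / 2 * 1 + (xl + xr) / 2) with xr by field.
  replace ((xr - xl) / 2 * -1 + (xl + xr) / 2) with xl by field.
  reflexivity.
Qed.

Section SlopeJumpOfLam.

Variables (k : nat) (u : R -> R -> R) (M : R).
Hypotheses (Hk : (1 <= k)%nat) (Hu : C_m_R2 (k + 2) u) (HW : W_bound (k + 2) u M).

Let dy (m : nat) : R -> R -> R := Dw (repeat false m) u.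

Lemma is_derive_dy m x y : (m <= S k)%nat -> is_derive (fun t => dy m x t) y (dy (S m) x y).
Proof.
  intros Hm. apply Derive_correct.
  refine (proj2 (proj1 Hu (repeat false m) _ x y)). rewrite repeat_length. lia.
Qed.

Lemma is_derive_x_dy x y :
  is_derive (fun t => dy (S k) t y) x (Dw (true :: repeat false (S k)) u x y).
Proof.
  apply Derive_correct.
  refine (proj1 (proj1 Hu (repeat false (S k)) _ x y)). rewrite repeat_length. lia.
Qed.

Lemma W_bound_nonneg : 0 <= M.
Proof.
  pose proof (proj1 HW nil ltac:(simpl; lia) 0 0 ltac:(unfold in_sq; lra)).
  pose proof (Rabs_pos (Dw nil u 0 0)). lra.
Qed.

Variables (a b c be ga h : R).
Hypotheses (Ha : 0 <= a) (Hab : a < b) (Hbc : b < c) (Hc : c <= 1)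
  (Hbe : 0 < be) (Hlo : 0 <= ga - be) (Hhi : ga + be <= 1)
  (Hhab : b - a <= h) (Hhbc : c - b <= h) (Hhbe : be <= h).

Let q (m : nat) (t : R) : R := be ^ S m * slope_jump a b c (fun x => dy (S m) x (be * t + ga)).

Lemma is_derive_q m t : (m < k)%nat -> is_derive (q m) t (q (S m) t).
Proof.
  intros Hm. unfold q.
  replace (be ^ S (S m)) with (be ^ S m * be) by (simpl; ring).
  rewrite Rmult_assoc, <- slope_jump_scal.
  apply is_derive_scal, (is_derive_slope_jump (fun x s => dy (S m) x (be * s + ga))).
  intros x. apply (is_derive_affine_comp (dy (S m) x)), is_derive_dy. lia.
Qed.

Lemma q_top_bound t : -1 <= t <= 1 -> Rabs (q k t) <= 2 * M * h ^ (k + 2).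
Proof.
  intros Ht. unfold q. set (y := be * t + ga).
  assert (Hy : 0 <= y <= 1) by (unfold y; split; nra).
  assert (Hjump : Rabs (slope_jump a b c (fun x => dy (S k) x y)) <= M * (2 * h)).
  { eapply Rle_trans.
    - apply (slope_jump_bound _ (fun x => Dw (true :: repeat false (S k)) u x y)); auto.
      + intros x _. apply is_derive_x_dy.
      + intros x x' Hx Hx'.
        pose proof (proj2 HW (true :: repeat false (S k)) ltac:(simpl; rewrite repeat_length; lia)
                      x y x' y ltac:(split; lra) ltac:(split; lra)) as HL.
        rewrite Rminus_diag, Rabs_R0, Rmax_left in HL by apply Rabs_pos. exact HL.
    - apply Rmult_le_compat_l; [apply W_bound_nonneg | lra]. }
  assert (Hpow : Rabs (be ^ S k) <= h ^ S k).
  { rewrite <- RPow_abs, Rabs_right by lra. apply pow_incr. lra. }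
  rewrite Rabs_mult.
  replace (2 * M * h ^ (k + 2)) with (h ^ S k * (M * (2 * h)))
    by (replace (k + 2)%nat with (S (S k)) by lia; simpl; ring).
  apply Rmult_le_compat; auto using Rabs_pos.
Qed.

Lemma slope_jump_lam :
  slope_jump a b c (fun x => lam (k + 1) (fun t => u x (be * t + ga)))
  = (2 * INR k + 1) / 2 * RInt (fun t => q 0 t * Legendre k t) (-1) 1.
Proof.
  assert (Hcont : forall x y, continuous (dy 1 x) y)
    by (intros; exact (is_derive_continuous_R _ _ _ (is_derive_dy 1 x y ltac:(lia)))).
  assert (Hint : forall x, ex_RInt (fun t => dy 1 x (be * t + ga) * Legendre k t) (-1) 1).
  { intros x. apply ex_RInt_continuous_R. intros t.
    apply continuous_mult_R; [|apply continuous_Legendre].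
    apply (is_derive_continuous_R _ _ (be * dy 2 x (be * t + ga))).
    apply (is_derive_affine_comp (dy 1 x)), is_derive_dy. lia. }
  transitivity (slope_jump a b c (fun x => (2 * INR k + 1) / 2 *
                  (be * RInt (fun t => dy 1 x (be * t + ga) * Legendre k t) (-1) 1))).
  { unfold slope_jump.
    rewrite !(lam_affine (k + 1) _ (dy 1 _)) by (auto; try lia; intros; apply is_derive_dy; lia).
    rewrite plus_INR. replace (k + 1 - 1)%nat with k by lia. simpl INR.
    replace (2 * (INR k + 1) - 1) with (2 * INR k + 1) by ring. reflexivity. }
  rewrite slope_jump_scal, slope_jump_scal, <- RInt_slope_jump by exact Hint.
  f_equal. rewrite <- RInt_scal_R.
  - apply (RInt_ext (V := R_CompleteNormedModule)). intros t _. unfold q.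
    rewrite slope_jump_mult_r. as_R_eq; ring.
  - exact (ex_RInt_slope_jump (fun x t => dy 1 x (be * t + ga) * Legendre k t) a b c _ _ Hint).
Qed.

Lemma slope_jump_lam_bound :
  Rabs (slope_jump a b c (fun x => lam (k + 1) (fun t => u x (be * t + ga))))
  <= 2 * INR (2 * k + 1) * 3 ^ k * h ^ (k + 2) * M.
Proof.
  pose proof (pos_INR k).
  rewrite slope_jump_lam, Rabs_mult, (Rabs_right ((2 * INR k + 1) / 2)) by lra.
  eapply Rle_trans.
  { apply Rmult_le_compat_l; [lra|].
    apply (RInt_Legendre_bound k q); [exact Hk | apply is_derive_q | apply q_top_bound]. }
  rewrite plus_INR, mult_INR. simpl INR. apply Req_le. field.
Qed.

End SlopeJumpOfLam.

Lemma Mcoef_1_slope_jump k u M a b c yl yr h :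
  (1 <= k)%nat -> C_m_R2 (k + 2) u -> W_bound (k + 2) u M ->
  0 <= a -> a < b -> b < c -> c <= 1 -> 0 <= yl -> yl < yr -> yr <= 1 ->
  b - a <= h -> c - b <= h -> yr - yl <= h ->
  Rabs (Mcoef u a b yl yr 1 (k + 1) / (b - a) - Mcoef u b c yl yr 1 (k + 1) / (c - b))
  <= INR (2 * k + 1) * 3 ^ k * h ^ (k + 2) * M.
Proof.
  intros Hk Hu HW Ha Hab Hbc Hc Hyl Hy Hyr Hh1 Hh2 Hh3.
  rewrite !Mcoef_1.
  set (F := fun x => lam (k + 1) (fun t => u x ((yr - yl) / 2 * t + (yl + yr) / 2))).
  change (Rabs ((F b - F a) / 2 / (b - a) - (F c - F b) / 2 / (c - b))
          <= INR (2 * k + 1) * 3 ^ k * h ^ (k + 2) * M).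
  replace ((F b - F a) / 2 / (b - a) - (F c - F b) / 2 / (c - b))
    with (slope_jump a b c F / 2) by (unfold slope_jump; field; lra).
  unfold Rdiv. rewrite Rabs_mult, (Rabs_right (/ 2)) by lra.
  apply (Rmult_le_reg_r 2); [lra|].
  rewrite Rmult_assoc, Rinv_l, Rmult_1_r by lra.
  eapply Rle_trans; [apply (slope_jump_lam_bound k u M) with (h := h); auto; lra | right; ring].
Qed.

(** * Exchanging the variables *)

Lemma map_negb_involutive (w : list bool) : map negb (map negb w) = w.
Proof. induction w as [|[] w IH]; simpl; congruence. Qed.

Lemma Dw_swap w u x y : Dw (map negb w) (fun x y => u y x) x y = Dw w u y x.
Proof.
  revert x y. induction w as [|[] w IH]; intros x y; [reflexivity | |];
    simpl; apply Derive_ext; intros t; apply IH.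
Qed.

Lemma C_m_R2_swap m u : C_m_R2 m u -> C_m_R2 m (fun x y => u y x).
Proof.
  intros [Hd Hc]; split; intros w Hw x y;
    rewrite <- (map_negb_involutive w) in Hw |- *; rewrite length_map in Hw.
  - destruct (Hd (map negb w) Hw y x) as [Hy Hx].
    split; [apply (ex_derive_ext (fun t => Dw (map negb w) u y t)) |
            apply (ex_derive_ext (fun t => Dw (map negb w) u t x))];
      auto; intros; symmetry; apply Dw_swap.
  - apply (continuous_ext (fun p => Dw (map negb w) u (snd p) (fst p)));
      [intros; symmetry; apply Dw_swap|].
    apply (continuous_comp_2 snd fst (Dw (map negb w) u));
      [apply continuous_snd | apply continuous_fst | apply Hc, Hw].
Qed.

Lemma W_bound_swap m u M : W_bound m u M -> W_bound m (fun x y => u y x) M.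
Proof.
  intros [Hb HL]; split.
  - intros w Hw x y Hxy. rewrite <- (map_negb_involutive w), (Dw_swap (map negb w) u).
    apply Hb; [rewrite length_map; exact Hw | unfold in_sq in *; tauto].
  - intros w Hw x y x' y' Hxy Hxy'.
    rewrite <- (map_negb_involutive w), !(Dw_swap (map negb w) u), Rmax_comm.
    apply HL; [rewrite length_map; exact Hw | unfold in_sq in *; tauto ..].
Qed.

(* [lam 1] is a difference of point values, so it commutes with the linear functional [lam n]. *)
Lemma Mcoef_swap n m u xl xr yl yr : (2 <= n)%nat -> (2 <= m)%nat -> C_m_R2 m u ->
  Mcoef u xl xr yl yr n 1 = Mcoef (fun x y => u y x) yl yr xl xr 1 n.
Proof.
  intros Hn Hm [Hu _]. unfold Mcoef.
  set (al := (xr - xl) / 2). set (ga := (xl + xr) / 2).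
  set (B := fun yh => (yr - yl) / 2 * yh + (yl + yr) / 2).
  assert (HD : forall y t, is_derive (fun xh => u (al * xh + ga) y) t
                             (al * Dw (true :: nil) u (al * t + ga) y)).
  { intros y t. apply (is_derive_affine_comp (fun s => u s y)), Derive_correct.
    exact (proj1 (Hu nil ltac:(simpl; lia) _ y)). }
  assert (HC : forall y t, continuous (fun xh => al * Dw (true :: nil) u (al * xh + ga) y) t).
  { intros y t.
    apply (is_derive_continuous_R _ _ (al * (al * Dw (true :: true :: nil) u (al * t + ga) y))).
    apply is_derive_scal, (is_derive_affine_comp (fun s => Dw (true :: nil) u s y)), Derive_correct.
    exact (proj1 (Hu (true :: nil) ltac:(simpl; lia) _ y)). }
  transitivity (lam n (fun xh => (u (al * xh + ga) (B 1) - u (al * xh + ga) (B (-1))) / 2));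
    [apply lam_ext; reflexivity|].
  rewrite (lam_half_minus n _ _ _ _ Hn (HD (B 1)) (HD (B (-1))) (HC (B 1)) (HC (B (-1)))).
  reflexivity.
Qed.

Lemma Mcoef_k1_slope_jump k u M xl xr a b c h :
  (1 <= k)%nat -> C_m_R2 (k + 2) u -> W_bound (k + 2) u M ->
  0 <= xl -> xl < xr -> xr <= 1 -> 0 <= a -> a < b -> b < c -> c <= 1 ->
  xr - xl <= h -> b - a <= h -> c - b <= h ->
  Rabs (Mcoef u xl xr a b (k + 1) 1 / (b - a) - Mcoef u xl xr b c (k + 1) 1 / (c - b))
  <= INR (2 * k + 1) * 3 ^ k * h ^ (k + 2) * M.
Proof.
  intros Hk Hu HW **.
  rewrite !(Mcoef_swap (k + 1) (k + 2)) by (auto; lia).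
  apply Mcoef_1_slope_jump; auto using C_m_R2_swap, W_bound_swap.
Qed.

(** * Meshes *)

Lemma is_mesh_le N xs i j : is_mesh N xs -> (i <= j <= N)%nat -> xs i <= xs j.
Proof.
  intros (_ & _ & _ & Hs). induction j as [|j IH]; intros Hij.
  - replace i with 0%nat by lia. lra.
  - destruct (Nat.eq_dec i (S j)) as [->|Hne]; [lra|].
    pose proof (Hs (S j) ltac:(lia)) as H. replace (S j - 1)%nat with j in H by lia.
    pose proof (IH ltac:(lia)). lra.
Qed.

Lemma is_mesh_cell N xs i : is_mesh N xs -> (1 <= i <= N)%nat ->
  0 <= xs (i - 1)%nat /\ xs (i - 1)%nat < xs i /\ xs i <= 1.
Proof.
  intros Hm Hi. pose proof Hm as (_ & H0 & H1 & Hs).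
  rewrite <- H0, <- H1. repeat split; [apply (is_mesh_le N); auto; lia | apply Hs; lia |
                                       apply (is_mesh_le N); auto; lia].
Qed.

Lemma step_le_maxstep xs N i : (1 <= i <= N)%nat -> step xs i <= maxstep xs N.
Proof.
  induction N as [|N IH]; intros Hi; [lia|]. simpl.
  destruct (Nat.eq_dec i (S N)) as [->|Hne].
  - unfold step. replace (S N - 1)%nat with N by lia. apply Rmax_r.
  - eapply Rle_trans; [apply IH; lia | apply Rmax_l].
Qed.

Theorem mainTheorem3 :
  forall (k : nat), (1 <= k)%nat -> forall c1 : R,
  exists C : R,
  forall (Nx : nat) (xs : nat -> R) (Ny : nat) (ys : nat -> R),
    is_mesh Nx xs -> is_mesh Ny ys -> quasi_uniform c1 Nx xs Ny ys ->
  forall u : R -> R -> R, C_m_R2 (k + 2) u ->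
  forall M : R, W_bound (k + 2) u M ->
    (forall i j, (1 <= i <= Nx - 1)%nat -> (1 <= j <= Ny)%nat ->
       Rabs (coefK u xs ys i j 1 (k + 1) / step xs i
             - coefK u xs ys (i + 1) j 1 (k + 1) / step xs (i + 1))
       <= C * meshsize Nx xs Ny ys ^ (k + 2) * M) /\
    (forall i j, (1 <= i <= Nx)%nat -> (1 <= j <= Ny - 1)%nat ->
       Rabs (coefK u xs ys i j (k + 1) 1 / step ys j
             - coefK u xs ys i (j + 1) (k + 1) 1 / step ys (j + 1))
       <= C * meshsize Nx xs Ny ys ^ (k + 2) * M).
Proof.
  intros k Hk c1. exists (INR (2 * k + 1) * 3 ^ k).
  intros Nx xs Ny ys Hx Hy _ u Hu M HW.
  assert (Hsx : forall i, (1 <= i <= Nx)%nat -> step xs i <= meshsize Nx xs Ny ys)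
    by (intros; eapply Rle_trans; [apply step_le_maxstep; eauto | apply Rmax_l]).
  assert (Hsy : forall j, (1 <= j <= Ny)%nat -> step ys j <= meshsize Nx xs Ny ys)
    by (intros; eapply Rle_trans; [apply step_le_maxstep; eauto | apply Rmax_r]).
  split; intros i j Hi Hj; unfold coefK.
  - pose proof (is_mesh_cell Nx xs i Hx ltac:(lia)).
    pose proof (is_mesh_cell Nx xs (i + 1) Hx ltac:(lia)).
    pose proof (is_mesh_cell Ny ys j Hy ltac:(lia)).
    pose proof (Hsx i ltac:(lia)). pose proof (Hsx (i + 1)%nat ltac:(lia)). pose proof (Hsy j Hj).
    unfold step in *. replace (i + 1 - 1)%nat with i in * by lia.
    apply Mcoef_1_slope_jump; auto; lra.
  - pose proof (is_mesh_cell Nx xs i Hx Hi).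
    pose proof (is_mesh_cell Ny ys j Hy ltac:(lia)).
    pose proof (is_mesh_cell Ny ys (j + 1) Hy ltac:(lia)).
    pose proof (Hsx i Hi). pose proof (Hsy j ltac:(lia)). pose proof (Hsy (j + 1)%nat ltac:(lia)).
    unfold step in *. replace (j + 1 - 1)%nat with j in * by lia.
    apply Mcoef_k1_slope_jump; auto; lra.
Qed.
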